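(* Let $D=(D_1,D_2)$ with $D_1\in\mathcal{U}(n,s_1\cdots s_p)$ and $D_2\in\mathcal{U}(n,s_{p+1}\cdots s_{p+q})$, and assume $s_{p+1},\dots,s_t$ are odd and $s_{t+1},\dots,s_{p+q}$ are even, where $p\le t\le p+q$. Then $\mathrm{QQD}^2(D)\ge \mathrm{LB}_1$, where \begin{align*}\mathrm{LB}_1=&\;C+\frac1n\left(\frac32\right)^{p+q}+\frac{n-1}{n}\left(\frac54\right)^p\left(\frac65\right)^{\sum_{k=1}^p\frac{n-s_k}{s_k(n-1)}}\left(\frac32\right)^{\sum_{k=p+1}^{p+q}\frac{n-s_k}{s_k(n-1)}}\left(\frac54\right)^{\sum_{k=t+1}^{p+q}\frac{n}{s_k(n-1)}}\\&\times\prod_{k=p+1}^{t}\prod_{i=1}^{(s_k-1)/2}\left(\frac32-\frac{2i(2s_k-2i)}{4s_k^2}\right)^{\frac{2n}{s_k(n-1)}}\prod_{k=t+1}^{p+q}\prod_{i=1}^{(s_k/2)-1}\left(\frac32-\frac{2i(2s_k-2i)}{4s_k^2}\right)^{\frac{2n}{s_k(n-1)}},\end{align*} and $C=-\prod_{k=1}^{p}\left(\frac{5s_k+1}{4s_k}\right)\left(\frac43\right)^q$.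
   Context: A U-type design in $\mathcal{U}(n,s_1\cdots s_m)$ is an $n\times m$ matrix whose $k$th column takes each value in $\{0,\dots,s_k-1\}$ equally often. $D=(D_1,D_2)$ has $p$ qualitative columns ($D_1$) followed by $q$ quantitative columns ($D_2$). For quantitative columns a level $x$ is transformed to $(2x+1)/(2s_k)\in[0,1]$. Let $\chi=\prod_k\chi_k$, $\chi_k=\{0,\dots,s_k-1\}$ for $k\le p$, $\chi_k=[0,1]$ for $k>p$, and $F$ the uniform distribution on $\chi$. Kernel: $\mathcal{K}(t,z)=\prod_k\mathcal{K}_k(t_k,z_k)$ with $\mathcal{K}_k=(3/2)^{\delta_{t_kz_k}}(5/4)^{1-\delta_{t_kz_k}}$ for $k\le p$ ($\delta$ the Kronecker delta) and $\mathcal{K}_k=\frac32-|t_k-z_k|+|t_k-z_k|^2$ for $k>p$. For $D$ with (transformed) rows $x_1,\dots,x_n$, the squared qualitative-quantitative discrepancy is $\mathrm{QQD}^2(D)=\int_{\chi^2}\mathcal{K}\,dF\,dF-\frac2n\sum_i\int_\chi\mathcal{K}(t,x_i)dF(t)+\frac1{n^2}\sum_{i,j}\mathcal{K}(x_i,x_j)$. Empty sums are $0$ and empty products are $1$. *)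

From HB Require Import structures.
From mathcomp Require Import all_boot all_order all_algebra.
From mathcomp Require Import all_classical all_reals all_analysis.
Set Implicit Arguments. Unset Strict Implicit. Unset Printing Implicit Defensive.
Import Order.TTheory GRing.Theory Num.Theory.
Import numFieldNormedType.Exports.
Local Open Scope classical_set_scope.
Local Open Scope ring_scope.

(* Columns are indexed 0 .. p+q-1 (0-based); column k is qualitative iff k < p.
   s k is the number of levels of column k. *)

Definition Utype (n m : nat) (s : nat -> nat) (D : 'M[nat]_(n, m)) : Prop :=
  forall k : 'I_m,
    (forall i : 'I_n, (D i k < s k)%N) /\
    (forall v w : nat, (v < s k)%N -> (w < s k)%N ->
        #|[set i : 'I_n | D i k == v]| = #|[set i : 'I_n | D i k == w]|).

Section QQD.
Variable R : realType.
Variables (p q : nat) (s : nat -> nat).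

Definition Kk (k : nat) (a b : R) : R :=
  if (k < p)%N then (if a == b then 3/2 else 5/4)
  else 3/2 - `|a - b| + `|a - b| ^+ 2.

Definition Kern (t z : nat -> R) : R := \prod_(k < p + q) Kk k (t k) (z k).

Definition avg (k : nat) (f : R -> R) : R :=
  if (k < p)%N then (s k)%:R^-1 * \sum_(x < s k) f x%:R
  else \int[@lebesgue_measure R]_(x in `[0, 1]) f x.

Definition upd (t : nat -> R) (j : nat) (x : R) : nat -> R :=
  fun i => if i == j then x else t i.

Fixpoint iterint (k : nat) (g : (nat -> R) -> R) (t : nat -> R) : R :=
  match k with
  | 0 => g t
  | k'.+1 => avg k' (fun x => iterint k' g (upd t k' x))
  end.

(* integral of g over chi with respect to F (product of the uniform laws,
   computed as an iterated integral) *)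
Definition intF (g : (nat -> R) -> R) : R := iterint (p + q) g (fun _ => 0).

Definition xpt n (D : 'M[nat]_(n, p + q)) (i : 'I_n) : nat -> R :=
  fun k => match insub k with
           | Some k' => if (k < p)%N then (D i k')%:R
                        else ((D i k')%:R *+ 2 + 1) / ((s k)%:R *+ 2)
           | None => 0
           end.

Definition QQD2 n (D : 'M[nat]_(n, p + q)) : R :=
  intF (fun t => intF (fun z => Kern t z))
  - 2 / n%:R * \sum_(i < n) intF (fun t => Kern t (xpt D i))
  + 1 / (n%:R ^+ 2) * \sum_(i < n) \sum_(j < n) Kern (xpt D i) (xpt D j).

End QQD.

From HB Require Import structures.
From mathcomp Require Import all_boot all_order all_algebra.
From mathcomp Require Import all_classical all_reals all_analysis.
From mathcomp Require Import ring lra zify.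
Set Implicit Arguments. Unset Strict Implicit. Unset Printing Implicit Defensive.
Import Order.TTheory GRing.Theory Num.Theory.
Import numFieldNormedType.Exports.
Local Open Scope classical_set_scope.
Local Open Scope ring_scope.

(** Integrating the product kernel one coordinate at a time, a qualitative
    factor averages to (5 s_k + 1)/(4 s_k) and a quantitative one to 4/3,
    whatever the fixed point of chi_k; hence both integral terms of QQD^2 equal
    the same constant.  In the double sum over rows the diagonal contributes
    (3/2)^(p+q)/n, and the n(n-1) off-diagonal terms are bounded below, by
    convexity of exp, by n(n-1) times the exponential of the mean of ln K over
    ordered pairs of distinct rows.  Since ln K splits over columns and each
    level occurs n/s_k times in a column of a U-type design, this mean is a sum
    over columns of explicit averages over the s_k x s_k table of kernel values
    between levels.  For a quantitative column the table is circulant, with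
    entry 3/2 - r(s_k - r)/s_k^2 at cyclic distance r, and the symmetry
    r <-> s_k - r folds each row onto 1 <= r < s_k/2, plus the middle value 5/4
    when s_k is even. *)

Lemma normD_mul_sub_le (R : realDomainType) (u h : R) :
  `|(u + h) * `|u + h| - u * `|u| - 2 * `|u| * h| <= h ^+ 2.
Proof.
have [u0|u0] := lerP 0 u; have [uh0|uh0] := lerP 0 (u + h).
- rewrite (ger0_norm u0) (ger0_norm uh0).
  have -> : (u + h) * (u + h) - u * u - 2 * u * h = h ^+ 2 by ring.
  by rewrite ger0_norm ?sqr_ge0.
- by rewrite (ger0_norm u0) (ltr0_norm uh0) ler_norml; apply/andP; split; nra.
- by rewrite (ltr0_norm u0) (ger0_norm uh0) ler_norml; apply/andP; split; nra.
- rewrite (ltr0_norm u0) (ltr0_norm uh0).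
  have -> : (u + h) * - (u + h) - u * - u - 2 * - u * h = - h ^+ 2 by ring.
  by rewrite normrN ger0_norm ?sqr_ge0.
Qed.

Section QuantitativeKernel.
Variable R : realType.
Implicit Types x z : R.

Lemma is_derive_subr_mul_norm z x :
  is_derive x 1 (fun y => (y - z) * `|y - z|) (2 * `|x - z|).
Proof.
set B := fun y => _.
have dB : h^-1 *: ((B \o shift x) (h *: 1) - B x) @[h --> 0^'] --> 2 * `|x - z|.
  apply/cvgrPdist_le => e e0; near=> h.
  have h0 : h != 0 by near: h; exact: nbhs_dnbhs_neq.
  rewrite /B /= [h%:A]mulr1 (_ : h + x - z = (x - z) + h); last by ring.
  rewrite -[h^-1 *: _]/(h^-1 * _); set u := x - z.
  have -> : 2 * `|u| - h^-1 * ((u + h) * `|u + h| - u * `|u|)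
      = - h^-1 * ((u + h) * `|u + h| - u * `|u| - 2 * `|u| * h) by field.
  rewrite normrM normrN normrV ?unitfE // ler_pdivrMl ?normr_gt0 //.
  apply: (le_trans (normD_mul_sub_le u h)).
  rewrite -real_normK ?num_real // expr2 ler_wpM2l //.
  by near: h; exact: dnbhs0_le.
apply: DeriveDef; first by apply/cvg_ex; exists (2 * `|x - z|).
by rewrite /derive; apply: cvg_lim.
Unshelve. all: by end_near.
Qed.

Definition kquan x z : R := 3/2 - `|x - z| + `|x - z| ^+ 2.

Lemma continuous_kquan z : continuous (kquan ^~ z).
Proof.
move=> x; have dist_cvg : `|y - z| @[y --> x] --> `|x - z|.
  by apply: cvg_norm; apply: cvgB; [exact: cvg_id | exact: cvg_cst].
apply: cvgD; first by apply: cvgB; [exact: cvg_cst | exact: dist_cvg].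
by rewrite /GRing.exp /=; apply: cvgM.
Qed.

Lemma Rintegral_kquan z : 0 <= z <= 1 ->
  \int[lebesgue_measure]_(x in `[0, 1]) kquan x z = 4/3.
Proof.
move=> /andP[z0 z1].
pose u : R -> R := id - cst z.
pose F : R -> R := (3/2 : R) \*: id - (1/2 : R) \*: (fun y => (y - z) * `|y - z|)
  + (1/3 : R) \*: u ^+ 3.
have dF x : is_derive x 1 F (kquan x z).
  have du : is_derive x 1 u (1 - 0).
    exact: is_deriveB (is_derive_id x 1) (is_derive_cst z x 1).
  have := is_deriveD (is_deriveB (is_deriveZ (3/2 : R) (is_derive_id x 1))
      (is_deriveZ (1/2 : R) (is_derive_subr_mul_norm z x)))
    (is_deriveZ (1/3 : R) (is_deriveX 3 du)).
  move=> dF_sum; apply: (is_derive_eq dF_sum); rewrite /kquan /u /= !fctE.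
  change (3/2 * 1 - 1/2 * (2 * `|x - z|) + 1/3 * (3 * (x - z) ^+ 2 * (1 - 0))
    = 3/2 - `|x - z| + `|x - z| ^+ 2 :> R).
  by rewrite real_normK ?num_real //; field.
have cF x : {for x, continuous F}.
  by apply: differentiable_continuous; apply/derivable1_diffP; case: (dF x).
rewrite /Rintegral (@continuous_FTC2 _ (kquan ^~ z) F) //=.
- change (3/2 * 1 - 1/2 * ((1 - z) * `|1 - z|) + 1/3 * (1 - z) ^+ 3
    - (3/2 * 0 - 1/2 * ((0 - z) * `|0 - z|) + 1/3 * (0 - z) ^+ 3) = 4/3 :> R).
  by rewrite sub0r normrN (ger0_norm z0) ger0_norm ?subr_ge0 //; field.
- by apply: continuous_in_subspaceT => x _; exact: continuous_kquan.
- split; first by move=> x _; case: (dF x).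
  + by apply: cvg_at_right_filter; exact: cF.
  + by apply: cvg_at_left_filter; exact: cF.
- by move=> x _; rewrite derive1E; case: (dF x).
Qed.

Lemma Rintegral01_cst (r : R) : \int[lebesgue_measure]_(x in `[0, 1]) r = r.
Proof.
by rewrite Rintegral_cst //= lebesgue_measure_itv /= lte_fin ltr01 oppr0 adde0 /= mulr1.
Qed.

End QuantitativeKernel.

Lemma sumr_const_ord (V : nmodType) m (x : V) : \sum_(i < m) x = x *+ m.
Proof. by rewrite sumr_const card_ord. Qed.

Section BalancedSums.
Variable R : pzRingType.

Lemma sum_ord_if_eq S v (x y : R) : (v < S)%N ->
  \sum_(w < S) (if v == w :> nat then x else y) = x + (S.-1)%:R * y.
Proof.
move=> vS; rewrite (bigD1 (Ordinal vS)) //= eqxx; congr (_ + _).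
rewrite (eq_bigr (fun _ => y)); last by move=> w wv; rewrite ifN // eq_sym.
by rewrite sumr_const cardC1 card_ord mulr_natl.
Qed.

Variables (n S c : nat) (a : 'I_n -> nat).
Hypotheses (a_lt : forall i, (a i < S)%N)
  (a_balanced : forall v, (v < S)%N -> #|[set i | a i == v]| = c).

Lemma sum_balanced (F : nat -> R) : \sum_i F (a i) = \sum_(v < S) c%:R * F v.
Proof.
rewrite (partition_big (fun i => Ordinal (a_lt i)) predT) //=.
apply: eq_bigr => v _; rewrite (eq_bigr (fun _ => F v)); last by move=> i /eqP <-.
rewrite sumr_const -(a_balanced (ltn_ord v)) mulr_natl; congr (_ *+ _).
by apply: eq_card => i; apply/idP/idP => [/mem_set|/set_mem].
Qed.

Lemma sum_offdiag_balanced (g : nat -> nat -> R) L : (forall v, g v v = L) ->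
  \sum_i \sum_(j | j != i) g (a i) (a j) =
    c%:R ^+ 2 * \sum_(v < S) \sum_(w < S) g v w - n%:R * L.
Proof.
move=> g_diag.
have drop_diag i : \sum_(j | j != i) g (a i) (a j) = \sum_j g (a i) (a j) - L.
  by rewrite [in RHS](bigD1 i) //= g_diag addrC addrK.
rewrite (eq_bigr _ (fun i _ => drop_diag i)) sumrB sumr_const card_ord mulr_natl.
congr (_ - _); rewrite (eq_bigr _ (fun i _ => sum_balanced (g (a i)))).
rewrite (sum_balanced (fun v => \sum_(w < S) c%:R * g v w)) mulr_sumr.
apply: eq_bigr => v _.
by rewrite !mulr_sumr; apply: eq_bigr => w _; rewrite mulrA -expr2.
Qed.

End BalancedSums.

Lemma mean_offdiag_balanced (R : numFieldType) n S c (a : 'I_n -> nat)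
    (g : nat -> nat -> R) L :
  (forall i, (a i < S)%N) -> (forall v, (v < S)%N -> #|[set i | a i == v]| = c) ->
  (forall v, g v v = L) -> n = (c * S)%N -> (1 < n)%N ->
  (\sum_i \sum_(j | j != i) g (a i) (a j)) / (n%:R * (n.-1)%:R) =
    (n%:R / S%:R ^+ 2 * \sum_(v < S) \sum_(w < S) g v w - L) / (n.-1)%:R.
Proof.
move=> a_lt a_bal g_diag ncS n_gt1; rewrite (sum_offdiag_balanced a_lt a_bal g_diag).
have c0 : c%:R != 0 :> R by rewrite pnatr_eq0; lia.
have S0 : S%:R != 0 :> R by rewrite pnatr_eq0; lia.
have n1 : (n.-1)%:R != 0 :> R by rewrite pnatr_eq0; lia.
have nR : n%:R = c%:R * S%:R :> R by rewrite ncS natrM.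
by rewrite nR; field; rewrite n1 S0 c0.
Qed.

Lemma sum_ord_circ (V : nmodType) S (H : nat -> V) v : (v < S)%N ->
  \sum_(w < S) H ((v + S - w) %% S)%N = \sum_(r < S) H r.
Proof.
move=> vS; have S0 : (0 < S)%N by lia.
have modE (w : 'I_S) : ((v + S - w) %% S = if (w <= v)%N then v - w else v + S - w)%N.
  case: leqP => wv; last by rewrite modn_small //; lia.
  by rewrite (_ : v + S - w = v - w + S)%N ?modnDr ?modn_small //; lia.
pose f (w : 'I_S) : 'I_S := Ordinal (ltn_pmod (v + S - w) S0).
have f_inj : injective f.
  move=> w1 w2 /(congr1 val) /=; rewrite !modE => e; apply: val_inj => /=.
  by move: e (ltn_ord w1) (ltn_ord w2); case: (leqP w1 v); case: (leqP w2 v); lia.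
by rewrite [RHS](reindex_inj f_inj).
Qed.

Section Palindromes.
Variable R : pzRingType.

Lemma sum_ord_odd_palindrome m (f : nat -> R) :
  (forall r, (r <= m.*2.+1)%N -> f r = f (m.*2.+1 - r)%N) ->
  \sum_(r < m.*2.+1) f r = f 0%N + 2 * \sum_(1 <= i < m.+1) f i.
Proof.
move=> f_sym; rewrite -(big_mkord xpredT) big_ltn // (big_cat_nat _ (n := m.+1)) //=; last lia.
rewrite mulr_natl mulr2n; congr (_ + (_ + _)).
rewrite -[in LHS](add1n m) big_addn (_ : m.*2.+1 - m = m.+1)%N; last lia.
rewrite [RHS]big_nat_rev; apply: eq_big_nat => i /andP[i1 i2] /=.
by rewrite f_sym; [congr f|]; lia.
Qed.

Lemma sum_ord_even_palindrome m (f : nat -> R) : (0 < m)%N ->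
  (forall r, (r <= m.*2)%N -> f r = f (m.*2 - r)%N) ->
  \sum_(r < m.*2) f r = f 0%N + 2 * \sum_(1 <= i < m) f i + f m.
Proof.
move=> m0 f_sym; rewrite -(big_mkord xpredT) big_ltn; last lia.
rewrite (big_cat_nat _ (n := m)) //=; last lia.
rewrite (big_ltn (m := m)) /=; last lia.
rewrite mulr_natl mulr2n -!addrA; congr (_ + (_ + _)).
rewrite addrC; congr (_ + _).
rewrite -[in LHS](add1n m) big_addn (_ : m.*2 - m = m)%N; last lia.
rewrite [RHS]big_nat_rev; apply: eq_big_nat => i /andP[i1 i2] /=.
by rewrite f_sym; [congr f|]; lia.
Qed.

End Palindromes.

Section ExpLn.
Variable R : realType.

Lemma expR_mean_le (I : finType) (P : pred I) (y : I -> R) :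
  0 < \sum_(i | P i) (1 : R) ->
  (\sum_(i | P i) 1) * expR ((\sum_(i | P i) y i) / \sum_(i | P i) 1)
    <= \sum_(i | P i) expR (y i).
Proof.
set N := \sum_(i | P i) 1 => N0; set mu := _ / N.
have tangent i : expR mu * (1 + (y i - mu)) <= expR (y i).
  by rewrite -{2}(subrK mu (y i)) expRD mulrC ler_wpM2r ?expR_ge0 ?expR_ge1Dx.
apply: le_trans (ler_sum _ (fun i _ => tangent i)).
have sum_mu : \sum_(i | P i) mu = mu * N.
  by rewrite /N mulr_sumr; under [RHS]eq_bigr do rewrite mulr1.
have sum_y : \sum_(i | P i) y i = mu * N by rewrite /mu mulrVK // unitfE gt_eqF.
by rewrite -mulr_sumr big_split /= sumrB -/N sum_mu sum_y subrr addr0 mulrC.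
Qed.

Lemma ln_prod (I : finType) (P : pred I) (F : I -> R) :
  (forall i, P i -> 0 < F i) -> ln (\prod_(i | P i) F i) = \sum_(i | P i) ln (F i).
Proof.
move=> F_gt0; suff [] : 0 < \prod_(i | P i) F i /\
    ln (\prod_(i | P i) F i) = \sum_(i | P i) ln (F i) by [].
elim/big_rec2: _ => [|i x y Pi [x0 <-]]; first by rewrite ln1 ltr01.
by split; [rewrite mulr_gt0 ?F_gt0 | rewrite lnM // posrE F_gt0].
Qed.

End ExpLn.

Section LevelKernel.
Variable R : realType.

Definition hquan (S r : nat) : R := 3/2 - r%:R * (S%:R - r%:R) / S%:R ^+ 2.

Lemma hquan0 S : hquan S 0 = 3/2.
Proof. by rewrite /hquan !mul0r subr0. Qed.

Lemma hquan_half m : (0 < m)%N -> hquan m.*2 m = 5/4.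
Proof.
move=> m_gt0; rewrite /hquan -mul2n natrM.
have : m%:R != 0 :> R by rewrite pnatr_eq0 -lt0n.
by move=> m0; field.
Qed.

Lemma hquan_subn S r : (r <= S)%N -> hquan S (S - r) = hquan S r.
Proof. by move=> rS; rewrite /hquan natrB //; ring. Qed.

Lemma hquan_gt0 S r : (0 < S)%N -> (r <= S)%N -> 0 < hquan S r.
Proof.
move=> S_gt0 rS; rewrite /hquan subr_gt0 ltr_pdivrMr ?exprn_gt0 ?ltr0n //.
have : r%:R <= S%:R :> R by rewrite ler_nat.
have : 0 <= r%:R :> R by rewrite ler0n.
have : 0 < S%:R :> R by rewrite ltr0n.
nra.
Qed.

Lemma sum_ln_hquan_odd S : odd S ->
  \sum_(r < S) ln (hquan S r) = ln (3/2) + 2 * \sum_(1 <= i < (S.-1 %/ 2).+1) ln (hquan S i).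
Proof.
move=> S_odd; have S_half : S = (S.-1 %/ 2).*2.+1.
  by move: (odd_double_half S); rewrite S_odd add1n => S_eq; rewrite -{2}S_eq /= divn2 doubleK.
have := sum_ord_odd_palindrome (m := S.-1 %/ 2) (f := fun r => ln (hquan S r)).
by rewrite -S_half hquan0; apply=> r rS; rewrite hquan_subn.
Qed.

Lemma sum_ln_hquan_even S : (0 < S)%N -> ~~ odd S ->
  \sum_(r < S) ln (hquan S r) =
    ln (3/2) + 2 * \sum_(1 <= i < S %/ 2) ln (hquan S i) + ln (5/4).
Proof.
move=> S_gt0 S_even; have S_half : S = (S %/ 2).*2.
  by move: (odd_double_half S); rewrite (negbTE S_even) add0n divn2.
have half_gt0 : (0 < S %/ 2)%N by move: S_gt0; rewrite {1}S_half double_gt0.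
have := sum_ord_even_palindrome (f := fun r => ln (hquan S r)) half_gt0.
have half_eq : hquan S (S %/ 2) = 5/4 by rewrite {1}S_half hquan_half.
by rewrite -S_half hquan0 half_eq; apply=> r rS; rewrite hquan_subn.
Qed.

End LevelKernel.

Section IteratedIntegral.
Variables (R : realType) (p : nat) (s : nat -> nat).

Lemma iterint_factor m (phi : nat -> R -> R) (a : nat -> R) :
  (forall k c, (k < m)%N -> avg p s k (fun x => c * phi k x) = c * a k) ->
  forall (G : (nat -> R) -> R) t,
  (forall z z', (forall k, (m <= k)%N -> z k = z' k) -> G z = G z') ->
  iterint p s m (fun z => G z * \prod_(k < m) phi k (z k)) t = G t * \prod_(k < m) a k.
Proof.
elim: m => [|m IH] avgZ G t G_high /=; first by rewrite !big_ord0.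
have -> : (fun z => G z * \prod_(k < m.+1) phi k (z k)) =
    (fun z => (G z * phi m (z m)) * \prod_(k < m) phi k (z k)).
  by apply: funext => z; rewrite big_ord_recr /= mulrAC mulrA.
rewrite big_ord_recr /= mulrA -avgZ //; congr avg; apply: funext => x.
rewrite IH; first last.
- move=> z z' zz'; rewrite (zz' m (leqnn m)) (G_high z z') // => k mk.
  by rewrite zz' // ltnW.
- by move=> k c km; rewrite avgZ // ltnW.
rewrite /upd eqxx (G_high _ t); first by rewrite mulrAC.
by move=> k mk; rewrite ifN // neq_ltn mk orbT.
Qed.

End IteratedIntegral.

Section Kernel.
Variables (R : realType) (p : nat) (s : nat -> nat).
Local Notation Kk := (@Kk R p).
Local Notation avg := (@avg R p s).
Local Notation hquan := (@hquan R).

Definition chi k (x : R) : Prop :=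
  if (k < p)%N then exists2 v, (v < s k)%N & x = v%:R else 0 <= x <= 1.

Definition level_point k v : R :=
  if (k < p)%N then v%:R else (v%:R *+ 2 + 1) / ((s k)%:R *+ 2).

Definition kernel_mean k : R :=
  if (k < p)%N then ((s k)%:R *+ 5 + 1) / ((s k)%:R *+ 4) else 4/3.

Lemma Kk_gt0 k x y : 0 < Kk k x y.
Proof.
rewrite /Kk; case: ifP => _; first by case: ifP.
have : 0 <= (`|x - y| - 1/2) ^+ 2 by rewrite sqr_ge0.
nra.
Qed.

Lemma Kk_sym k x y : Kk k x y = Kk k y x.
Proof. by rewrite /Kk eq_sym distrC. Qed.

Lemma Kk_id k x : Kk k x x = 3/2.
Proof. by rewrite /Kk eqxx subrr normr0 expr0n /= subr0 addr0; case: ifP. Qed.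

Lemma Kk_qual k v w : (k < p)%N -> Kk k v%:R w%:R = if v == w then 3/2 else 5/4.
Proof. by move=> kp; rewrite /Kk kp eqr_nat. Qed.

Lemma Kk_quan k : (p <= k)%N -> Kk k = @kquan R.
Proof. by move=> pk; rewrite /Kk ltnNge pk. Qed.

Lemma chi_level_point k v : (v < s k)%N -> chi k (level_point k v).
Proof.
move=> vs; rewrite /chi /level_point; case: (k < p)%N; first by exists v.
have : v%:R + 1 <= (s k)%:R :> R by rewrite natr1 ler_nat.
have : 0 <= v%:R :> R by rewrite ler0n.
move=> v0 vs'; rewrite !mulr2n divr_ge0 ?ler_pdivrMr /=; lra.
Qed.

Lemma eq_avg k (f g : R -> R) : (forall x, chi k x -> f x = g x) -> avg k f = avg k g.
Proof.
rewrite /avg /chi => fg; case: ifP => kp.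
  by congr (_ * _); apply: eq_bigr => v _; rewrite fg // kp; exists v.
by apply: eq_Rintegral => x; rewrite inE /= in_itv /= => x01; rewrite fg ?kp.
Qed.

Lemma avg_cst k c : (0 < s k)%N -> avg k (fun=> c) = c.
Proof.
rewrite /avg => s_gt0; case: ifP => _; last exact: Rintegral01_cst.
by rewrite sumr_const card_ord -[c *+ _]mulr_natl mulKf // pnatr_eq0 -lt0n.
Qed.

Lemma avgZ_Kk k c x : avg k (fun y => c * Kk k x y) = c * avg k (Kk k x).
Proof.
rewrite /avg; case: (ltnP k p) => kp; first by rewrite -mulr_sumr mulrCA.
rewrite (Kk_quan kp).
apply: RintegralZl => //; apply: continuous_compact_integrable; first exact: segment_compact.
apply: continuous_in_subspaceT => y _.
rewrite (_ : kquan x = fun z => kquan z x); first exact: continuous_kquan.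
by apply: funext => z; rewrite /kquan distrC.
Qed.

Lemma avg_Kk k x : chi k x -> avg k (Kk k x) = kernel_mean k.
Proof.
rewrite /chi /avg /kernel_mean; case: (ltnP k p) => kp.
  case=> v vs ->; rewrite (eq_bigr (fun w : 'I_(s k) => if v == w then 3/2 else 5/4)).
    rewrite sum_ord_if_eq // -(prednK (leq_ltn_trans (leq0n v) vs)) -natr1.
    by field; rewrite natr1 pnatr_eq0.
  by move=> w _; rewrite Kk_qual.
move=> x01; rewrite -(Rintegral_kquan x01); apply: eq_Rintegral => y _.
by rewrite Kk_sym Kk_quan.
Qed.

Lemma kquan_level_point k v w : (p <= k)%N -> (v < s k)%N -> (w < s k)%N ->
  kquan (level_point k v) (level_point k w) = hquan (s k) ((v + s k - w) %% s k).
Proof.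
move=> pk vs ws; rewrite /kquan /level_point /hquan ltnNge pk /=.
set S := s k; have S_gt0 : 0 < S%:R :> R by rewrite ltr0n; lia.
have -> : (v%:R *+ 2 + 1) / (S%:R *+ 2) - (w%:R *+ 2 + 1) / (S%:R *+ 2)
    = (v%:R - w%:R) / S%:R :> R.
  by rewrite !mulr2n; field; rewrite !gt_eqF ?addr_gt0.
rewrite real_normK ?num_real // normrM (gtr0_norm (_ : 0 < S%:R^-1)) ?invr_gt0 //.
case: (leqP w v) => wv.
  rewrite (_ : v + S - w = v - w + S)%N; last lia.
  rewrite modnDr modn_small; last lia.
  by rewrite natrB // ger0_norm ?subr_ge0 ?ler_nat //; field; rewrite gt_eqF.
rewrite modn_small; last lia.
rewrite natrB; last lia.
by rewrite natrD ltr0_norm ?subr_lt0 ?ltr_nat //; field; rewrite gt_eqF.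
Qed.

Lemma sum_ln_Kk_levels_qual k : (k < p)%N ->
  \sum_(v < s k) \sum_(w < s k) ln (Kk k (level_point k v) (level_point k w)) =
    (s k)%:R * (ln (3/2) + (s k).-1%:R * ln (5/4)).
Proof.
move=> kp; rewrite [RHS]mulr_natl -[_ *+ s k]sumr_const_ord.
apply: eq_bigr => v _; rewrite -(sum_ord_if_eq _ _ (ltn_ord v)); apply: eq_bigr => w _.
by rewrite /level_point kp Kk_qual // (fun_if (@ln R)).
Qed.

Lemma sum_ln_Kk_levels_quan k : (p <= k)%N ->
  \sum_(v < s k) \sum_(w < s k) ln (Kk k (level_point k v) (level_point k w)) =
    (s k)%:R * \sum_(r < s k) ln (hquan (s k) r).
Proof.
move=> pk; rewrite [RHS]mulr_natl -[_ *+ s k]sumr_const_ord.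
apply: eq_bigr => v _; rewrite -(sum_ord_circ (fun r => ln (hquan (s k) r)) (ltn_ord v)).
by apply: eq_bigr => w _; rewrite Kk_quan // kquan_level_point.
Qed.

End Kernel.

Section LowerBound.
Variables (R : realType) (n p q : nat) (s : nat -> nat) (t : nat).
Hypotheses (t_bounds : (p <= t <= p + q)%N)
  (s_gt0 : forall k, (k < p + q)%N -> (0 < s k)%N).
Local Notation hquan := (@hquan R).

Definition expo_ns k : R := (n%:R - (s k)%:R) / ((s k)%:R * n.-1%:R).
Definition expo_n k : R := n%:R / ((s k)%:R * n.-1%:R).
Definition expo_2n k : R := (2 * n)%:R / ((s k)%:R * n.-1%:R).

Definition column_log_mean k : R :=
  if (k < p)%N then ln (5/4) + expo_ns k * ln (6/5)
  else if (k < t)%N then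
    expo_ns k * ln (3/2) + \sum_(1 <= i < ((s k).-1 %/ 2).+1) expo_2n k * ln (hquan (s k) i)
  else expo_ns k * ln (3/2) + expo_n k * ln (5/4)
    + \sum_(1 <= i < s k %/ 2) expo_2n k * ln (hquan (s k) i).

Definition lb_factor k i : R :=
  3 / 2 - (i *+ 2)%:R * ((s k)%:R *+ 2 - (i *+ 2)%:R) / (((s k)%:R ^+ 2) *+ 4).

Lemma lb_factor_hquan k i : (0 < s k)%N -> lb_factor k i = hquan (s k) i.
Proof.
move=> sk_gt0; rewrite /lb_factor /hquan natrD !mulr2n.
have : (s k)%:R != 0 :> R by rewrite pnatr_eq0 -lt0n.
by move=> s0; field; rewrite s0.
Qed.

Definition lower_product : R :=
  (5 / 4) ^+ p * ((6 / 5) `^ (\sum_(0 <= k < p) expo_ns k))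
  * ((3 / 2) `^ (\sum_(p <= k < p + q) expo_ns k))
  * ((5 / 4) `^ (\sum_(t <= k < p + q) expo_n k))
  * (\prod_(p <= k < t) \prod_(1 <= i < ((s k).-1 %/ 2).+1) (lb_factor k i `^ expo_2n k))
  * (\prod_(t <= k < p + q) \prod_(1 <= i < (s k %/ 2)) (lb_factor k i `^ expo_2n k)).

Lemma sum_column_log_mean : \sum_(k < p + q) column_log_mean k =
  p%:R * ln (5/4) + (\sum_(0 <= k < p) expo_ns k) * ln (6/5)
  + (\sum_(p <= k < p + q) expo_ns k) * ln (3/2)
  + (\sum_(t <= k < p + q) expo_n k) * ln (5/4)
  + \sum_(p <= k < t) \sum_(1 <= i < ((s k).-1 %/ 2).+1) expo_2n k * ln (hquan (s k) i)
  + \sum_(t <= k < p + q) \sum_(1 <= i < s k %/ 2) expo_2n k * ln (hquan (s k) i).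
Proof.
have /andP[pt tq] := t_bounds.
rewrite -(big_mkord xpredT) (big_cat_nat (leq0n p) (leq_addr q p)) /=.
rewrite (big_cat_nat pt tq) [in RHS](big_cat_nat pt tq) /=.
have sum_qual : \sum_(0 <= k < p) column_log_mean k =
    \sum_(0 <= k < p) (ln (5/4) + expo_ns k * ln (6/5)).
  by apply: eq_big_nat => k /andP[_ kp]; rewrite /column_log_mean kp.
have sum_odd : \sum_(p <= k < t) column_log_mean k = \sum_(p <= k < t)
    (expo_ns k * ln (3/2) + \sum_(1 <= i < ((s k).-1 %/ 2).+1) expo_2n k * ln (hquan (s k) i)).
  by apply: eq_big_nat => k /andP[pk kt]; rewrite /column_log_mean kt ltnNge pk.
have sum_even : \sum_(t <= k < p + q) column_log_mean k = \sum_(t <= k < p + q)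
    (expo_ns k * ln (3/2) + expo_n k * ln (5/4)
     + \sum_(1 <= i < s k %/ 2) expo_2n k * ln (hquan (s k) i)).
  by apply: eq_big_nat => k /andP[tk _]; rewrite /column_log_mean !ltnNge tk (leq_trans pt tk).
rewrite sum_qual sum_odd sum_even !big_split /= sumr_const_nat subn0 -!mulr_suml -mulr_natl.
ring.
Qed.

Lemma lower_productE : lower_product = expR (\sum_(k < p + q) column_log_mean k).
Proof.
have powRE (a x : R) : 0 < a -> a `^ x = expR (x * ln a) by move=> a0; rewrite /powR gt_eqF.
have prodE m1 m2 (F : nat -> nat) : (m2 <= p + q)%N ->
    (forall k, (m1 <= k < m2)%N -> (F k <= s k)%N) ->
    \prod_(m1 <= k < m2) \prod_(1 <= i < F k) (lb_factor k i `^ expo_2n k) =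
    expR (\sum_(m1 <= k < m2) \sum_(1 <= i < F k) expo_2n k * ln (hquan (s k) i)).
  move=> m2_le F_le; rewrite expR_sum; apply: eq_big_nat => k k_in.
  have sk_gt0 := s_gt0 (leq_trans (proj2 (andP k_in)) m2_le).
  rewrite expR_sum; apply: eq_big_nat => i /andP[_ i_lt].
  rewrite lb_factor_hquan // powRE // hquan_gt0 //.
  by have := F_le k k_in; lia.
have /andP[pt tq] := t_bounds.
rewrite sum_column_log_mean !expRD expRM_natl lnK ?posrE // -!powRE //.
rewrite -!prodE // => [k _ | k /andP[_ kt]]; first exact: leq_div.
have := s_gt0 (leq_trans kt tq).
by have := leq_div (s k).-1 2; lia.
Qed.

End LowerBound.

Section Design.
Variables (R : realType) (n p q : nat) (s : nat -> nat) (D : 'M[nat]_(n, p + q)).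
Hypotheses (n_gt1 : (1 < n)%N) (D_Utype : Utype s D).
Local Notation Kk := (@Kk R p).
Local Notation avg := (@avg R p s).
Local Notation intF := (@intF R p q s).
Local Notation Kern := (@Kern R p q).
Local Notation x_ := (xpt R s D).
Local Notation chi := (@chi R p s).
Local Notation level_point := (@level_point R p s).
Local Notation kernel_mean := (@kernel_mean R p s).
Local Notation hquan := (@hquan R).

Lemma Utype_lt i (k : 'I_(p + q)) : (D i k < s k)%N.
Proof. exact: (D_Utype k).1. Qed.

Lemma levels_gt0 k : (k < p + q)%N -> (0 < s k)%N.
Proof.
move=> k_lt; have i : 'I_n by exists 0%N; lia.
by have /= := Utype_lt i (Ordinal k_lt); lia.
Qed.

Definition replication (k : 'I_(p + q)) := #|[set i : 'I_n | D i k == 0%N]|.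

Lemma replicationE (k : 'I_(p + q)) v : (v < s k)%N ->
  #|[set i : 'I_n | D i k == v]| = replication k.
Proof. by move=> vs; apply: (D_Utype k).2 => //; exact: levels_gt0. Qed.

Lemma n_replication (k : 'I_(p + q)) : n = (replication k * s k)%N.
Proof.
apply/eqP; rewrite -(eqr_nat R) natrM; apply/eqP.
have := sum_balanced (Utype_lt^~ k) (replicationE (k := k)) (fun _ => 1 : R).
by rewrite !sumr_const_ord mulr1 => ->; rewrite mulr_natr.
Qed.

Lemma xptE i (k : 'I_(p + q)) : x_ i k = level_point k (D i k).
Proof.
rewrite /xpt /level_point insubT /=; first exact: ltn_ord.
by move=> k_lt; rewrite (_ : Sub (k : nat) k_lt = k) //; apply: val_inj.
Qed.

Lemma chi_xpt i (k : 'I_(p + q)) : chi k (x_ i k).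
Proof. by rewrite xptE; apply: chi_level_point; exact: Utype_lt. Qed.

Lemma intF_Kern t : intF (fun z => Kern t z) = \prod_(k < p + q) avg k (Kk k (t k)).
Proof.
have -> : (fun z => Kern t z) = (fun z => 1 * \prod_(k < p + q) Kk k (t k) (z k)).
  by apply: funext => z; rewrite mul1r.
rewrite /intF (iterint_factor (phi := fun k => Kk k (t k)) (a := fun k => avg k (Kk k (t k)))) ?mul1r //.
by move=> k c _; exact: avgZ_Kk.
Qed.

Lemma intF_intF_Kern :
  intF (fun t => intF (fun z => Kern t z)) = \prod_(k < p + q) kernel_mean k.
Proof.
have -> : (fun t => intF (fun z => Kern t z)) =
    (fun t => 1 * \prod_(k < p + q) avg k (Kk k (t k))).
  by apply: funext => t; rewrite intF_Kern mul1r.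
rewrite /intF (iterint_factor (phi := fun k y => avg k (Kk k y)) (a := kernel_mean)) ?mul1r // => k c k_lt.
rewrite -(avg_cst p (c * kernel_mean k) (levels_gt0 k_lt)).
by apply: eq_avg => x x_chi; rewrite avg_Kk.
Qed.

Lemma intF_Kern_xpt i :
  intF (fun t => Kern t (x_ i)) = \prod_(k < p + q) kernel_mean k.
Proof.
have -> : (fun t => Kern t (x_ i)) = (fun t => 1 * \prod_(k < p + q) Kk k (t k) (x_ i k)).
  by apply: funext => t; rewrite mul1r.
rewrite /intF (iterint_factor (phi := fun k y => Kk k y (x_ i k)) (a := kernel_mean)) ?mul1r // => k c k_lt.
under eq_fun do rewrite Kk_sym.
by rewrite avgZ_Kk (avg_Kk (chi_xpt i (Ordinal k_lt))).
Qed.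

Lemma prod_kernel_mean : \prod_(k < p + q) kernel_mean k =
  (\prod_(k < p) (((s k)%:R *+ 5 + 1) / ((s k)%:R *+ 4))) * (4 / 3) ^+ q.
Proof.
rewrite big_split_ord /=; congr (_ * _).
  by apply: eq_bigr => k _; rewrite /kernel_mean /= ltn_ord.
rewrite (eq_bigr (fun _ => 4/3)) ?prodr_const ?card_ord //.
by move=> k _; rewrite /kernel_mean /= ltnNge leq_addr.
Qed.

Lemma Kern_id x : Kern x x = (3/2) ^+ (p + q).
Proof.
by rewrite /Kern (eq_bigr (fun _ => 3/2)) ?prodr_const ?card_ord // => k _; rewrite Kk_id.
Qed.

Lemma QQD2E : QQD2 R s D =
  - ((\prod_(k < p) (((s k)%:R *+ 5 + 1) / ((s k)%:R *+ 4))) * (4 / 3) ^+ q)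
  + 1 / n%:R * (3 / 2) ^+ (p + q)
  + 1 / n%:R ^+ 2 * \sum_i \sum_(j | j != i) Kern (x_ i) (x_ j).
Proof.
have diag i : \sum_j Kern (x_ i) (x_ j) = (3/2) ^+ (p + q) + \sum_(j | j != i) Kern (x_ i) (x_ j).
  by rewrite (bigD1 i) //= Kern_id.
rewrite /QQD2 intF_intF_Kern (eq_bigr _ (fun i _ => intF_Kern_xpt i)) sumr_const_ord.
rewrite (eq_bigr _ (fun i _ => diag i)) big_split /= sumr_const_ord prod_kernel_mean.
have n0 : n%:R != 0 :> R by rewrite pnatr_eq0; lia.
by field.
Qed.

Lemma Kern_gt0 x y : 0 < Kern x y.
Proof. by apply: prodr_gt0 => k _; exact: Kk_gt0. Qed.

Lemma ln_Kern x y : ln (Kern x y) = \sum_(k < p + q) ln (Kk k (x k) (y k)).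
Proof. by rewrite /Kern ln_prod // => k _; exact: Kk_gt0. Qed.

Lemma mean_offdiag_ln_Kk (k : 'I_(p + q)) :
  (\sum_i \sum_(j | j != i) ln (Kk k (x_ i k) (x_ j k))) / (n%:R * n.-1%:R) =
  (n%:R / (s k)%:R ^+ 2 *
     \sum_(v < s k) \sum_(w < s k) ln (Kk k (level_point k v) (level_point k w))
   - ln (3/2)) / n.-1%:R.
Proof.
under eq_bigr do under eq_bigr do rewrite !xptE.
apply: (@mean_offdiag_balanced _ n (s k) (replication k) (fun i => D i k)
  (fun v w => ln (Kk k (level_point k v) (level_point k w))) (ln (3/2))).
- by move=> i; exact: Utype_lt.
- exact: replicationE.
- by move=> v /=; rewrite Kk_id.
- exact: n_replication.
- exact: n_gt1.
Qed.

Variable t : nat.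
Hypotheses (t_bounds : (p <= t <= p + q)%N)
  (s_odd : forall k, (p <= k < t)%N -> odd (s k))
  (s_even : forall k, (t <= k < p + q)%N -> ~~ odd (s k)).

Local Notation column_log_mean := (column_log_mean R n p s t).

Lemma mean_offdiag_ln_Kk_column (k : 'I_(p + q)) :
  (\sum_i \sum_(j | j != i) ln (Kk k (x_ i k) (x_ j k))) / (n%:R * n.-1%:R) =
  column_log_mean k.
Proof.
have s_gt0 := levels_gt0 (ltn_ord k).
have s0 : (s k)%:R != 0 :> R by rewrite pnatr_eq0 -lt0n.
have n1 : n.-1%:R != 0 :> R by rewrite pnatr_eq0; lia.
rewrite mean_offdiag_ln_Kk /column_log_mean /expo_ns /expo_n /expo_2n natrM.
case: (ltnP k p) => kp.
  have ln65 : ln (6/5 : R) = ln (3/2) - ln (5/4).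
    by rewrite -ln_div ?posrE //; congr ln; field.
  rewrite sum_ln_Kk_levels_qual // ln65 -subn1 natrB //.
  have npred : n.-1%:R = n%:R - 1 :> R by rewrite -subn1 natrB //; lia.
  by rewrite npred; field; rewrite s0 -npred n1.
rewrite sum_ln_Kk_levels_quan // -!mulr_sumr.
case: (ltnP k t) => kt.
  rewrite sum_ln_hquan_odd; last by apply: s_odd; rewrite kp kt.
  by field; rewrite s0 n1.
rewrite sum_ln_hquan_even //; last by apply: s_even; rewrite kt ltn_ord.
by field; rewrite s0 n1.
Qed.

Lemma mean_offdiag_ln_Kern :
  (\sum_i \sum_(j | j != i) ln (Kern (x_ i) (x_ j))) / (n%:R * n.-1%:R) =
  \sum_(k < p + q) column_log_mean k.
Proof.
under eq_bigr do under eq_bigr do rewrite ln_Kern.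
under eq_bigr do rewrite exchange_big.
rewrite exchange_big /= mulr_suml; apply: eq_bigr => k _.
exact: mean_offdiag_ln_Kk_column.
Qed.

Lemma sum_offdiag_Kern_ge :
  n%:R * n.-1%:R * expR (\sum_(k < p + q) column_log_mean k) <=
  \sum_i \sum_(j | j != i) Kern (x_ i) (x_ j).
Proof.
have pairs : \sum_(i < n) \sum_(j < n | j != i) (1 : R) = n%:R * n.-1%:R.
  rewrite (eq_bigr (fun _ => n.-1%:R)) ?sumr_const_ord ?[RHS]mulr_natl // => i _.
  by rewrite sumr_const cardC1 card_ord.
have pairs_gt0 : 0 < n%:R * n.-1%:R :> R by rewrite mulr_gt0 // ltr0n; lia.
rewrite -pairs pair_big_dep in pairs_gt0.
rewrite -mean_offdiag_ln_Kern -pairs !pair_big_dep.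
apply: le_trans (@expR_mean_le R _ (fun u => true && (u.2 != u.1))
  (fun u => ln (Kern (x_ u.1) (x_ u.2))) pairs_gt0) _.
by apply: ler_sum => u _; rewrite lnK // posrE Kern_gt0.
Qed.

End Design.

Theorem theorem3 (R : realType) (n p q t : nat) (s : nat -> nat)
  (D : 'M[nat]_(n, p + q)) :
  (1 < n)%N ->
  Utype s D ->
  (p <= t <= p + q)%N ->
  (forall k, (p <= k < t)%N -> odd (s k)) ->
  (forall k, (t <= k < p + q)%N -> ~~ odd (s k)) ->
  let e k : R := (2 * n)%:R / ((s k)%:R * (n.-1)%:R) in
  let C : R := - ((\prod_(k < p) (((s k)%:R *+ 5 + 1) / ((s k)%:R *+ 4)))
                  * (4 / 3) ^+ q) in
  let h k (i : nat) : R :=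
    3 / 2 - (i *+ 2)%:R * ((s k)%:R *+ 2 - (i *+ 2)%:R)
            / (((s k)%:R ^+ 2) *+ 4) in
  let LB1 : R :=
    C + 1 / n%:R * (3 / 2) ^+ (p + q)
    + (n.-1)%:R / n%:R * (5 / 4) ^+ p
      * ((6 / 5) `^ (\sum_(0 <= k < p)
            ((n%:R - (s k)%:R) / ((s k)%:R * (n.-1)%:R))))
      * ((3 / 2) `^ (\sum_(p <= k < p + q)
            ((n%:R - (s k)%:R) / ((s k)%:R * (n.-1)%:R))))
      * ((5 / 4) `^ (\sum_(t <= k < p + q)
            (n%:R / ((s k)%:R * (n.-1)%:R))))
      * (\prod_(p <= k < t) \prod_(1 <= i < ((s k).-1 %/ 2).+1) (h k i `^ e k))
      * (\prod_(t <= k < p + q) \prod_(1 <= i < (s k %/ 2)) (h k i `^ e k)) in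
  LB1 <= @QQD2 R p q s n D.
Proof.
(* The let-bindings sit under [is_true], so they are unfolded rather than introduced. *)
move=> n_gt1 D_Utype t_bounds s_odd s_even; cbv beta zeta.
rewrite [X in _ + X <= _](_ : _ = n.-1%:R / n%:R * lower_product R n p q s t); last first.
  by rewrite /lower_product !mulrA.
rewrite QQD2E // lerD2l (lower_productE _ _ t_bounds (levels_gt0 n_gt1 D_Utype)).
have := sum_offdiag_Kern_ge R n_gt1 D_Utype t_bounds s_odd s_even.
set E := expR _ => E_le.
have n0 : n%:R != 0 :> R by rewrite pnatr_eq0; lia.
rewrite (_ : _ * E = 1 / n%:R ^+ 2 * (n%:R * n.-1%:R * E)); last by field.
by rewrite ler_wpM2l ?divr_ge0 ?exprn_ge0 ?ler0n.
Qed.
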